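(* Let $\mathcal{C}$ be a $\mathcal{B}$-central monoidal category and $A$ an algebra in $\mathcal{C}$, and suppose the $\mathcal{B}$-center $(Z_{\mathcal{B}}(A),\zeta^{\mathcal{B}}_A)$ and the full center $(Z(A),\zeta^{\mathbf{Vect}_\Bbbk}_A)$ of $A$ exist. Then there is a unique morphism $\xi_A\colon Z_{\mathcal{B}}(A)\to Z(A)$ in $\mathcal{Z}(\mathcal{C})$ with $\zeta^{\mathbf{Vect}_\Bbbk}_A\xi_A=\zeta^{\mathcal{B}}_A$, and it is a morphism of algebras in $\mathcal{Z}(\mathcal{C})$.
   Context: All categories are $\Bbbk$-linear abelian monoidal categories over a field $\Bbbk$, monoidal functors strong. $(\mathcal{B},\Psi)$ is braided monoidal. A monoidal category $\mathcal{C}$ is $\mathcal{B}$-central if it has a faithful monoidal functor $\mathrm{T}\colon\mathcal{B}\to\mathcal{C}$ and a natural isomorphism $\sigma_{V,B}\colon V\otimes\mathrm{T}(B)\to\mathrm{T}(B)\otimes V$ such that $B\mapsto(\mathrm{T}(B),\sigma^{-1}_{-,B})$ is a braided monoidal functor $(\mathcal{B},\otimes,\Psi^{-1})\to\mathcal{Z}(\mathcal{C})$, where $\mathcal{Z}(\mathcal{C})$ is the Drinfeld center (pairs $(V,c)$ of an object and a half-braiding $c_{V,X}\colon V\otimes X\to X\otimes V$, natural and compatible with tensor products). The relative center $\mathcal{Z}_{\mathcal{B}}(\mathcal{C})$ is the full braided monoidal subcategory of $\mathcal{Z}(\mathcal{C})$ of those $(V,c)$ with $c_{V,\mathrm{T}(B)}=\sigma_{V,B}$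 for all $B\in\mathcal{B}$. For an algebra $(A,m)$ in $\mathcal{C}$, the $\mathcal{B}$-center $(Z_{\mathcal{B}}(A),\zeta^{\mathcal{B}}_A)$ is the terminal object among pairs $((Z,c),\zeta)$ with $(Z,c)\in\mathcal{Z}_{\mathcal{B}}(\mathcal{C})$ and $\zeta\colon Z\to A$ in $\mathcal{C}$ with $m(\zeta\otimes\mathrm{Id}_A)=m(\mathrm{Id}_A\otimes\zeta)c_{Z,A}$ (morphisms: morphisms $f$ of the center with $\zeta' f=\zeta$); it is a commutative algebra in $\mathcal{Z}_{\mathcal{B}}(\mathcal{C})$. The full center $(Z(A),\zeta^{\mathbf{Vect}_\Bbbk}_A)$ is the same construction with $\mathcal{Z}(\mathcal{C})$ in place of $\mathcal{Z}_{\mathcal{B}}(\mathcal{C})$ (the case $\mathcal{B}=\mathbf{Vect}_\Bbbk$). *)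

Record Category := {
  ob :> Type;
  hom : ob -> ob -> Type;
  idm : forall a, hom a a;
  comp : forall x y z, hom y z -> hom x y -> hom x z;
  comp_id_l : forall a b (f : hom a b), comp _ _ _ (idm b) f = f;
  comp_id_r : forall a b (f : hom a b), comp _ _ _ f (idm a) = f;
  comp_assoc : forall a b c d (f : hom c d) (g : hom b c) (h : hom a b),
      comp _ _ _ f (comp _ _ _ g h) = comp _ _ _ (comp _ _ _ f g) h }.
Arguments hom {c0} _ _ : rename.
Arguments idm {c0} _ : rename.
Arguments comp {c0 x y z} _ _ : rename.
Notation "g ∘ f" := (comp g f) (at level 40, left associativity).

Record Monoidal := {
  mcat :> Category;
  tens : mcat -> mcat -> mcat;
  tensm : forall (a b c d : mcat), hom a b -> hom c d -> hom (tens a c) (tens b d);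
  unit_ob : mcat;
  assoc : forall a b c : mcat, hom (tens (tens a b) c) (tens a (tens b c));
  assoc_inv : forall a b c : mcat, hom (tens a (tens b c)) (tens (tens a b) c);
  lunit : forall a : mcat, hom (tens unit_ob a) a;
  lunit_inv : forall a : mcat, hom a (tens unit_ob a);
  runit : forall a : mcat, hom (tens a unit_ob) a;
  runit_inv : forall a : mcat, hom a (tens a unit_ob);
  tens_id : forall a b : mcat, tensm _ _ _ _ (idm a) (idm b) = idm (tens a b);
  tens_comp : forall (a b c d e f : mcat) (x : hom a b) (x' : hom b c)
      (y : hom d e) (y' : hom e f),
      tensm _ _ _ _ (x' ∘ x) (y' ∘ y) = tensm _ _ _ _ x' y' ∘ tensm _ _ _ _ x y;
  assoc_iso1 : forall a b c : mcat, assoc_inv a b c ∘ assoc a b c = idm _;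
  assoc_iso2 : forall a b c : mcat, assoc a b c ∘ assoc_inv a b c = idm _;
  assoc_nat : forall (a b c d e f : mcat) (x : hom a b) (y : hom c d) (z : hom e f),
      assoc b d f ∘ tensm _ _ _ _ (tensm _ _ _ _ x y) z
      = tensm _ _ _ _ x (tensm _ _ _ _ y z) ∘ assoc a c e;
  lunit_iso1 : forall a : mcat, lunit_inv a ∘ lunit a = idm _;
  lunit_iso2 : forall a : mcat, lunit a ∘ lunit_inv a = idm _;
  lunit_nat : forall (a b : mcat) (x : hom a b),
      lunit b ∘ tensm _ _ _ _ (idm unit_ob) x = x ∘ lunit a;
  runit_iso1 : forall a : mcat, runit_inv a ∘ runit a = idm _;
  runit_iso2 : forall a : mcat, runit a ∘ runit_inv a = idm _;
  runit_nat : forall (a b : mcat) (x : hom a b),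
      runit b ∘ tensm _ _ _ _ x (idm unit_ob) = x ∘ runit a;
  pentagon : forall a b c d : mcat,
      assoc a b (tens c d) ∘ assoc (tens a b) c d
      = tensm _ _ _ _ (idm a) (assoc b c d) ∘ assoc a (tens b c) d
        ∘ tensm _ _ _ _ (assoc a b c) (idm d);
  triangle : forall a b : mcat,
      tensm _ _ _ _ (idm a) (lunit b) ∘ assoc a unit_ob b
      = tensm _ _ _ _ (runit a) (idm b) }.
Arguments tens {m} _ _.
Arguments tensm {m a b c d} _ _.
Arguments unit_ob {m}.
Arguments assoc {m} _ _ _.
Arguments assoc_inv {m} _ _ _.
Arguments lunit {m} _.
Arguments lunit_inv {m} _.
Arguments runit {m} _.
Arguments runit_inv {m} _.
Notation "a ⊗ b" := (tens a b) (at level 35, right associativity).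
Notation "f ⊗m g" := (tensm f g) (at level 35, right associativity).

Record Braided := {
  bmon :> Monoidal;
  braid : forall a b : bmon, hom (a ⊗ b) (b ⊗ a);
  braid_inv : forall a b : bmon, hom (b ⊗ a) (a ⊗ b);
  braid_iso1 : forall a b : bmon, braid_inv a b ∘ braid a b = idm _;
  braid_iso2 : forall a b : bmon, braid a b ∘ braid_inv a b = idm _;
  braid_nat : forall (a b c d : bmon) (x : hom a b) (y : hom c d),
      braid b d ∘ (x ⊗m y) = (y ⊗m x) ∘ braid a c;
  hexagon1 : forall a b c : bmon,
      assoc b c a ∘ braid a (b ⊗ c) ∘ assoc a b c
      = (idm b ⊗m braid a c) ∘ assoc b a c ∘ (braid a b ⊗m idm c);
  hexagon2 : forall a b c : bmon,
      assoc_inv c a b ∘ braid (a ⊗ b) c ∘ assoc_inv a b c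
      = (braid a c ⊗m idm b) ∘ assoc_inv a c b ∘ (idm a ⊗m braid b c) }.
Arguments braid {b0} _ _ : rename.
Arguments braid_inv {b0} _ _ : rename.

Record MonFunctor (C D : Monoidal) := {
  Fo :> C -> D;
  Fm : forall a b : C, hom a b -> hom (Fo a) (Fo b);
  Fm_id : forall a : C, Fm _ _ (idm a) = idm (Fo a);
  Fm_comp : forall (a b c : C) (f : hom b c) (g : hom a b),
      Fm _ _ (f ∘ g) = Fm _ _ f ∘ Fm _ _ g;
  mJ : forall a b : C, hom (Fo a ⊗ Fo b) (Fo (a ⊗ b));
  mJ_inv : forall a b : C, hom (Fo (a ⊗ b)) (Fo a ⊗ Fo b);
  mJ_iso1 : forall a b : C, mJ_inv a b ∘ mJ a b = idm _;
  mJ_iso2 : forall a b : C, mJ a b ∘ mJ_inv a b = idm _;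
  mJ_nat : forall (a b c d : C) (x : hom a b) (y : hom c d),
      mJ b d ∘ (Fm _ _ x ⊗m Fm _ _ y) = Fm _ _ (x ⊗m y) ∘ mJ a c;
  mphi : hom (@unit_ob D) (Fo unit_ob);
  mphi_inv : hom (Fo unit_ob) (@unit_ob D);
  mphi_iso1 : mphi_inv ∘ mphi = idm _;
  mphi_iso2 : mphi ∘ mphi_inv = idm _;
  mF_assoc : forall a b c : C,
      Fm _ _ (assoc a b c) ∘ mJ (a ⊗ b) c ∘ (mJ a b ⊗m idm (Fo c))
      = mJ a (b ⊗ c) ∘ (idm (Fo a) ⊗m mJ b c) ∘ assoc (Fo a) (Fo b) (Fo c);
  mF_lunit : forall a : C,
      Fm _ _ (lunit a) ∘ mJ unit_ob a ∘ (mphi ⊗m idm (Fo a)) = lunit (Fo a);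
  mF_runit : forall a : C,
      Fm _ _ (runit a) ∘ mJ a unit_ob ∘ (idm (Fo a) ⊗m mphi) = runit (Fo a) }.
Arguments Fo {C D} _ _.
Arguments Fm {C D} _ {a b} _.
Arguments mJ {C D} _ _ _.
Arguments mphi {C D} _.

Definition faithful {C D : Monoidal} (F : MonFunctor C D) : Prop :=
  forall (a b : C) (f g : hom a b), Fm F f = Fm F g -> f = g.

(* An object of Z(C): an object V together with a family
   c_{V,X} : V ⊗ X -> X ⊗ V; validity (being a half-braiding) is a separate predicate. *)
Record ZObj (C : Monoidal) := mkZ {
  zob : C;
  zhb : forall X : C, hom (zob ⊗ X) (X ⊗ zob) }.
Arguments mkZ {C} _ _.
Arguments zob {C} _.
Arguments zhb {C} _ _.

Definition is_half_braiding {C : Monoidal} (Z : ZObj C) : Prop :=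
  (forall X : C, exists g : hom (X ⊗ zob Z) (zob Z ⊗ X),
       g ∘ zhb Z X = idm _ /\ zhb Z X ∘ g = idm _) /\
  (forall (X Y : C) (f : hom X Y),
       zhb Z Y ∘ (idm (zob Z) ⊗m f) = (f ⊗m idm (zob Z)) ∘ zhb Z X) /\
  (forall X Y : C,
       zhb Z (X ⊗ Y)
       = assoc_inv X Y (zob Z) ∘ (idm X ⊗m zhb Z Y) ∘ assoc X (zob Z) Y
         ∘ (zhb Z X ⊗m idm Y) ∘ assoc_inv (zob Z) X Y).

Definition is_zmor {C : Monoidal} (V W : ZObj C) (f : hom (zob V) (zob W)) : Prop :=
  forall X : C, (idm X ⊗m f) ∘ zhb V X = zhb W X ∘ (f ⊗m idm X).

Definition ztens {C : Monoidal} (V W : ZObj C) : ZObj C :=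
  mkZ (zob V ⊗ zob W)
    (fun X => assoc X (zob V) (zob W) ∘ (zhb V X ⊗m idm (zob W))
              ∘ assoc_inv (zob V) X (zob W) ∘ (idm (zob V) ⊗m zhb W X)
              ∘ assoc (zob V) (zob W) X).

Definition zunit (C : Monoidal) : ZObj C :=
  mkZ (@unit_ob C) (fun X => runit_inv X ∘ lunit X).

Record BCentral (B : Braided) (C : Monoidal) := {
  cT : MonFunctor B C;
  cT_faithful : faithful cT;
  sigma : forall (V : C) (b : B), hom (V ⊗ cT b) (cT b ⊗ V);
  sigma_inv : forall (V : C) (b : B), hom (cT b ⊗ V) (V ⊗ cT b);
  sigma_iso1 : forall V b, sigma_inv V b ∘ sigma V b = idm _;
  sigma_iso2 : forall V b, sigma V b ∘ sigma_inv V b = idm _;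
  sigma_nat_V : forall (V W : C) (f : hom V W) (b : B),
      sigma W b ∘ (f ⊗m idm (cT b)) = (idm (cT b) ⊗m f) ∘ sigma V b;
  sigma_nat_B : forall (V : C) (b b' : B) (g : hom b b'),
      sigma V b' ∘ (idm V ⊗m Fm cT g) = (Fm cT g ⊗m idm V) ∘ sigma V b;
  (* B ↦ (T(B), σ^{-1}_{-,B}) is a braided monoidal functor (B,⊗,Ψ^{-1}) → Z(C) *)
  Tz_valid : forall b : B,
      is_half_braiding (mkZ (cT b) (fun X => sigma_inv X b));
  Tz_mor : forall (b b' : B) (g : hom b b'),
      is_zmor (mkZ (cT b) (fun X => sigma_inv X b))
              (mkZ (cT b') (fun X => sigma_inv X b')) (Fm cT g);
  Tz_J : forall a b : B,
      is_zmor (ztens (mkZ (cT a) (fun X => sigma_inv X a))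
                     (mkZ (cT b) (fun X => sigma_inv X b)))
              (mkZ (cT (a ⊗ b)) (fun X => sigma_inv X (a ⊗ b))) (mJ cT a b);
  Tz_phi : is_zmor (zunit C)
              (mkZ (cT unit_ob) (fun X => sigma_inv X unit_ob)) (mphi cT);
  Tz_braided : forall a b : B,
      Fm cT (braid_inv b a) ∘ mJ cT a b = mJ cT b a ∘ sigma_inv (cT b) a }.
Arguments cT {B C} _.
Arguments sigma {B C} _ _ _.
Arguments sigma_inv {B C} _ _ _.

(* the relative center Z_B(C), as a predicate on objects of Z(C) *)
Definition in_rel_center {B : Braided} {C : Monoidal} (BC : BCentral B C)
  (Z : ZObj C) : Prop :=
  is_half_braiding Z /\ forall b : B, zhb Z (cT BC b) = sigma BC (zob Z) b.

Definition in_center {C : Monoidal} (Z : ZObj C) : Prop := is_half_braiding Z.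

Record Alg (C : Monoidal) := {
  aob : C;
  amul : hom (aob ⊗ aob) aob;
  aunit : hom unit_ob aob;
  amul_assoc : amul ∘ (amul ⊗m idm aob) = amul ∘ (idm aob ⊗m amul) ∘ assoc aob aob aob;
  amul_unit_l : amul ∘ (aunit ⊗m idm aob) = lunit aob;
  amul_unit_r : amul ∘ (idm aob ⊗m aunit) = runit aob }.
Arguments aob {C} _.
Arguments amul {C} _.
Arguments aunit {C} _.

(* candidates ((Z,c), ζ) with (Z,c) in the subcategory P of Z(C) *)
Definition center_cand {C : Monoidal} (P : ZObj C -> Prop) (A : Alg C)
  (Z : ZObj C) (zeta : hom (zob Z) (aob A)) : Prop :=
  P Z /\ amul A ∘ (zeta ⊗m idm (aob A)) = amul A ∘ (idm (aob A) ⊗m zeta) ∘ zhb Z (aob A).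

Definition is_P_center {C : Monoidal} (P : ZObj C -> Prop) (A : Alg C)
  (Z : ZObj C) (zeta : hom (zob Z) (aob A)) : Prop :=
  center_cand P A Z zeta /\
  forall (Z' : ZObj C) (zeta' : hom (zob Z') (aob A)),
    center_cand P A Z' zeta' ->
    exists! f : hom (zob Z') (zob Z), is_zmor Z' Z f /\ zeta ∘ f = zeta'.

Definition is_B_center {B : Braided} {C : Monoidal} (BC : BCentral B C)
  (A : Alg C) (Z : ZObj C) (zeta : hom (zob Z) (aob A)) : Prop :=
  is_P_center (in_rel_center BC) A Z zeta.

Definition is_full_center {C : Monoidal} (A : Alg C) (Z : ZObj C)
  (zeta : hom (zob Z) (aob A)) : Prop :=
  is_P_center in_center A Z zeta.

(* The (canonical) algebra structure on a center: the multiplication and unit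
   are morphisms in Z(C) through which ζ becomes an algebra map; by terminality
   these properties determine (m_Z, u_Z) uniquely. *)
Definition center_alg_structure {C : Monoidal} (A : Alg C) (Z : ZObj C)
  (zeta : hom (zob Z) (aob A)) (m : hom (zob Z ⊗ zob Z) (zob Z))
  (u : hom unit_ob (zob Z)) : Prop :=
  is_zmor (ztens Z Z) Z m /\ is_zmor (zunit C) Z u /\
  zeta ∘ m = amul A ∘ (zeta ⊗m zeta) /\ zeta ∘ u = aunit A.

Definition is_alg_mor {C : Monoidal} {X Y : C} (f : hom X Y)
  (mX : hom (X ⊗ X) X) (uX : hom unit_ob X)
  (mY : hom (Y ⊗ Y) Y) (uY : hom unit_ob Y) : Prop :=
  f ∘ mX = mY ∘ (f ⊗m f) /\ f ∘ uX = uY.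


(* Z_B(C) is a full subcategory of Z(C), so the B-center (Z_B(A), ζ^B) is a
   candidate for the full center, and terminality of Z(A) yields ξ and its
   uniqueness.  Both ξ ∘ m_B and m_F ∘ (ξ ⊗ ξ) are morphisms of Z(C) lifting the
   candidate m_A ∘ (ζ^B ⊗ ζ^B) on Z_B(A) ⊗ Z_B(A), hence they agree by
   terminality; likewise for the units.  This needs Z(C) to be closed under ⊗ and
   to contain the unit (coherence computations with the pentagon, the triangle
   and Kelly's unitor identities), and products of central maps to be central. *)

Section CategoryFacts.
Context {C : Category}.

Lemma idm_comp_cancel {a b : C} (f g : hom a b) : idm b ∘ f = idm b ∘ g -> f = g.
Proof. rewrite !comp_id_l. auto. Qed.

Lemma chain_eq2 {b c d : C} {x : hom c d} {y : hom b c} {r : hom b d} :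
  x ∘ y = r -> forall e (k : hom d e), k ∘ x ∘ y = k ∘ r.
Proof. intros H e k. rewrite <- H, !comp_assoc. reflexivity. Qed.

Lemma chain_eq3 {b c d f : C} {x : hom d f} {y : hom c d} {z : hom b c} {r : hom b f} :
  x ∘ y ∘ z = r -> forall e (k : hom f e), k ∘ x ∘ y ∘ z = k ∘ r.
Proof. intros H e k. rewrite <- H, !comp_assoc. reflexivity. Qed.

Lemma chain_eq4 {b c d f g : C} {w : hom f g} {x : hom d f} {y : hom c d} {z : hom b c}
  {r : hom b g} :
  w ∘ x ∘ y ∘ z = r -> forall e (k : hom g e), k ∘ w ∘ x ∘ y ∘ z = k ∘ r.
Proof. intros H e k. rewrite <- H, !comp_assoc. reflexivity. Qed.

Lemma chain_eq5 {b c d f g h : C} {v : hom g h} {w : hom f g} {x : hom d f} {y : hom c d}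
  {z : hom b c} {r : hom b h} :
  v ∘ w ∘ x ∘ y ∘ z = r -> forall e (k : hom h e), k ∘ v ∘ w ∘ x ∘ y ∘ z = k ∘ r.
Proof. intros H e k. rewrite <- H, !comp_assoc. reflexivity. Qed.

Lemma iso_move_r {a b c : C} (f : hom a b) (g : hom b a) (x : hom b c) (y : hom a c) :
  f ∘ g = idm _ -> x ∘ f = y -> x = y ∘ g.
Proof. intros Hfg H. rewrite <- H, <- comp_assoc, Hfg, comp_id_r. reflexivity. Qed.

Lemma inverse_unique {a b : C} (f : hom a b) (g g' : hom b a) :
  g ∘ f = idm _ -> f ∘ g' = idm _ -> g = g'.
Proof.
  intros Hg Hg'. rewrite <- (comp_id_r _ _ _ g), <- Hg', comp_assoc, Hg, comp_id_l.
  reflexivity.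
Qed.

Lemma iso_cancel_l {a b c : C} (f : hom b c) (g : hom c b) (x y : hom a b) :
  g ∘ f = idm _ -> f ∘ x = f ∘ y -> x = y.
Proof.
  intros Hgf H. rewrite <- (comp_id_l _ _ _ x), <- (comp_id_l _ _ _ y), <- Hgf,
    <- !comp_assoc, H. reflexivity.
Qed.

Lemma iso_cancel_r {a b c : C} (f : hom a b) (g : hom b a) (x y : hom b c) :
  f ∘ g = idm _ -> x ∘ f = y ∘ f -> x = y.
Proof.
  intros Hfg H. rewrite <- (comp_id_r _ _ _ x), <- (comp_id_r _ _ _ y), <- Hfg,
    !comp_assoc, H. reflexivity.
Qed.

End CategoryFacts.

(* Composites are kept left-associated, so a subterm [x ∘ y ∘ z] of a chain only
   appears as [k ∘ x ∘ y ∘ z]; the [chain_eq] lemmas rewrite it there.  Goals are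
   first padded with [idm ∘ _] so that such a prefix [k] always exists. *)
Ltac assoc_l := repeat rewrite comp_assoc.

Ltac rewrite_chain L :=
  first [ rewrite (chain_eq2 L) | rewrite (chain_eq3 L) | rewrite (chain_eq4 L)
        | rewrite (chain_eq5 L) | rewrite L ];
  assoc_l; repeat rewrite comp_id_r.

Section MonoidalFacts.
Context {C : Monoidal}.

Lemma whisker_l_comp (a b c d : C) (g : hom c d) (f : hom b c) :
  idm a ⊗m (g ∘ f) = (idm a ⊗m g) ∘ (idm a ⊗m f).
Proof. rewrite <- tens_comp, comp_id_l. reflexivity. Qed.

Lemma whisker_r_comp (a b c d : C) (g : hom c d) (f : hom b c) :
  (g ∘ f) ⊗m idm a = (g ⊗m idm a) ∘ (f ⊗m idm a).
Proof. rewrite <- tens_comp, comp_id_l. reflexivity. Qed.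

Lemma whisker_l_inverse (x a b : C) (f : hom a b) (g : hom b a) :
  g ∘ f = idm _ -> (idm x ⊗m g) ∘ (idm x ⊗m f) = idm _.
Proof. intros H. rewrite <- whisker_l_comp, H, tens_id. reflexivity. Qed.

Lemma whisker_r_inverse (x a b : C) (f : hom a b) (g : hom b a) :
  g ∘ f = idm _ -> (g ⊗m idm x) ∘ (f ⊗m idm x) = idm _.
Proof. intros H. rewrite <- whisker_r_comp, H, tens_id. reflexivity. Qed.

Lemma whisker_exchange (a b c d : C) (f : hom a b) (g : hom c d) :
  (idm b ⊗m g) ∘ (f ⊗m idm c) = (f ⊗m idm d) ∘ (idm a ⊗m g).
Proof. rewrite <- !tens_comp, !comp_id_l, !comp_id_r. reflexivity. Qed.

Lemma tens_split (a b c d : C) (f : hom a b) (g : hom c d) :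
  f ⊗m g = (f ⊗m idm d) ∘ (idm a ⊗m g).
Proof. rewrite <- tens_comp, comp_id_l, comp_id_r. reflexivity. Qed.

Lemma assoc_nat1 (a b c d : C) (x : hom a b) :
  assoc b c d ∘ ((x ⊗m idm c) ⊗m idm d) = (x ⊗m idm (c ⊗ d)) ∘ assoc a c d.
Proof. rewrite <- tens_id. apply assoc_nat. Qed.

Lemma assoc_nat2 (a b c d : C) (x : hom b c) :
  assoc a c d ∘ ((idm a ⊗m x) ⊗m idm d) = (idm a ⊗m (x ⊗m idm d)) ∘ assoc a b d.
Proof. apply assoc_nat. Qed.

Lemma assoc_nat3 (a b c d : C) (x : hom c d) :
  assoc a b d ∘ (idm (a ⊗ b) ⊗m x) = (idm a ⊗m (idm b ⊗m x)) ∘ assoc a b c.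
Proof. rewrite <- tens_id. apply assoc_nat. Qed.

Lemma assoc_inv_nat (a b c d e f : C) (x : hom a b) (y : hom c d) (z : hom e f) :
  assoc_inv b d f ∘ (x ⊗m (y ⊗m z)) = ((x ⊗m y) ⊗m z) ∘ assoc_inv a c e.
Proof.
  apply (iso_move_r (assoc a c e)); [apply assoc_iso2|].
  rewrite <- comp_assoc, <- assoc_nat, comp_assoc, assoc_iso1, comp_id_l. reflexivity.
Qed.

Lemma assoc_inv_nat1 (a b c d : C) (x : hom a b) :
  assoc_inv b c d ∘ (x ⊗m idm (c ⊗ d)) = ((x ⊗m idm c) ⊗m idm d) ∘ assoc_inv a c d.
Proof. rewrite <- tens_id. apply assoc_inv_nat. Qed.

Lemma assoc_inv_nat2 (a b c d : C) (x : hom b c) :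
  assoc_inv a c d ∘ (idm a ⊗m (x ⊗m idm d)) = ((idm a ⊗m x) ⊗m idm d) ∘ assoc_inv a b d.
Proof. apply assoc_inv_nat. Qed.

Lemma assoc_inv_nat3 (a b c d : C) (x : hom c d) :
  assoc_inv a b d ∘ (idm a ⊗m (idm b ⊗m x)) = (idm (a ⊗ b) ⊗m x) ∘ assoc_inv a b c.
Proof. rewrite <- (tens_id _ a b). apply assoc_inv_nat. Qed.

Lemma pentagon_whisker_assoc_inv (a b c d : C) :
  (idm a ⊗m assoc_inv b c d) ∘ assoc a b (c ⊗ d)
  = assoc a (b ⊗ c) d ∘ (assoc a b c ⊗m idm d) ∘ assoc_inv (a ⊗ b) c d.
Proof.
  apply (iso_move_r (assoc (a ⊗ b) c d)); [apply assoc_iso2|].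
  apply idm_comp_cancel. assoc_l.
  rewrite_chain (pentagon C a b c d).
  rewrite_chain (whisker_l_inverse a _ _ _ _ (assoc_iso1 C b c d)).
  reflexivity.
Qed.

Lemma pentagon_whisker_assoc (a b c d : C) :
  (idm a ⊗m assoc b c d) ∘ assoc a (b ⊗ c) d
  = assoc a b (c ⊗ d) ∘ assoc (a ⊗ b) c d ∘ (assoc_inv a b c ⊗m idm d).
Proof.
  apply (iso_move_r (assoc a b c ⊗m idm d)); [apply whisker_r_inverse, assoc_iso2|].
  symmetry. apply pentagon.
Qed.

Lemma pentagon_assoc_whisker_inv (a b c d : C) :
  assoc (a ⊗ b) c d ∘ (assoc_inv a b c ⊗m idm d)
  = assoc_inv a b (c ⊗ d) ∘ (idm a ⊗m assoc b c d) ∘ assoc a (b ⊗ c) d.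
Proof.
  symmetry. apply (iso_move_r (assoc a b c ⊗m idm d)); [apply whisker_r_inverse, assoc_iso2|].
  apply idm_comp_cancel. assoc_l.
  rewrite_chain (eq_sym (pentagon C a b c d)).
  rewrite_chain (assoc_iso1 C a b (c ⊗ d)).
  reflexivity.
Qed.

Lemma pentagon_inv (a b c d : C) :
  (assoc_inv a b c ⊗m idm d) ∘ assoc_inv a (b ⊗ c) d ∘ (idm a ⊗m assoc_inv b c d)
  ∘ assoc a b (c ⊗ d) = assoc_inv (a ⊗ b) c d.
Proof.
  apply (inverse_unique (assoc (a ⊗ b) c d)); [|apply assoc_iso2].
  apply idm_comp_cancel. assoc_l.
  rewrite_chain (pentagon C a b c d).
  rewrite_chain (whisker_l_inverse a _ _ _ _ (assoc_iso1 C b c d)).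
  rewrite_chain (assoc_iso1 C a (b ⊗ c) d).
  rewrite_chain (whisker_r_inverse d _ _ _ _ (assoc_iso1 C a b c)).
  reflexivity.
Qed.

Lemma tens_unit_r_inj (a b : C) (f g : hom a b) :
  f ⊗m idm unit_ob = g ⊗m idm unit_ob -> f = g.
Proof.
  intros H.
  rewrite <- (comp_id_r _ _ _ f), <- (comp_id_r _ _ _ g), <- (runit_iso2 C a), !comp_assoc,
    <- !runit_nat, H. reflexivity.
Qed.

Lemma tens_unit_l_inj (a b : C) (f g : hom a b) :
  idm unit_ob ⊗m f = idm unit_ob ⊗m g -> f = g.
Proof.
  intros H.
  rewrite <- (comp_id_r _ _ _ f), <- (comp_id_r _ _ _ g), <- (lunit_iso2 C a), !comp_assoc,
    <- !lunit_nat, H. reflexivity.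
Qed.

End MonoidalFacts.

Ltac rewrite_whisker_l x H :=
  let E := fresh in
  pose proof (f_equal (fun h => idm x ⊗m h) H) as E; cbv beta in E;
  rewrite ?whisker_l_comp in E; rewrite_chain E; clear E.

Ltac rewrite_whisker_r x H :=
  let E := fresh in
  pose proof (f_equal (fun h => h ⊗m idm x) H) as E; cbv beta in E;
  rewrite ?whisker_r_comp in E; rewrite_chain E; clear E.

Section UnitCoherence.
Context {C : Monoidal}.

Lemma runit_tens (a b : C) : runit (a ⊗ b) = (idm a ⊗m runit b) ∘ assoc a b unit_ob.
Proof.
  apply tens_unit_r_inj. rewrite whisker_r_comp.
  apply (iso_cancel_l (assoc a b unit_ob) (assoc_inv a b unit_ob)); [apply assoc_iso1|].
  rewrite <- (triangle C (a ⊗ b) unit_ob).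
  apply idm_comp_cancel. assoc_l.
  rewrite_chain (assoc_nat3 a b (unit_ob ⊗ unit_ob) unit_ob (lunit unit_ob)).
  rewrite_chain (pentagon C a b unit_ob unit_ob).
  rewrite_whisker_l a (triangle C b unit_ob).
  rewrite_chain (assoc_nat2 a (b ⊗ unit_ob) b unit_ob (runit b)).
  reflexivity.
Qed.

Lemma lunit_tens (a b : C) : lunit (a ⊗ b) ∘ assoc unit_ob a b = lunit a ⊗m idm b.
Proof.
  apply tens_unit_l_inj. rewrite whisker_l_comp.
  apply (iso_cancel_r (assoc unit_ob (unit_ob ⊗ a) b) (assoc_inv unit_ob (unit_ob ⊗ a) b));
    [apply assoc_iso2|].
  apply (iso_cancel_r (assoc unit_ob unit_ob a ⊗m idm b)
                      (assoc_inv unit_ob unit_ob a ⊗m idm b));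
    [apply whisker_r_inverse, assoc_iso2|].
  apply idm_comp_cancel. assoc_l.
  rewrite_chain (eq_sym (pentagon C unit_ob unit_ob a b)).
  rewrite_chain (triangle C unit_ob (a ⊗ b)).
  rewrite_chain (eq_sym (assoc_nat2 unit_ob (unit_ob ⊗ a) a b (lunit a))).
  rewrite_whisker_r b (triangle C unit_ob a).
  rewrite <- (tens_id C a b).
  rewrite_chain (assoc_nat C _ _ _ _ _ _ (runit unit_ob) (idm a) (idm b)).
  reflexivity.
Qed.

Lemma runit_inv_nat (a b : C) (x : hom a b) :
  runit_inv b ∘ x = (x ⊗m idm unit_ob) ∘ runit_inv a.
Proof.
  apply (iso_move_r (runit a)); [apply runit_iso2|].
  rewrite <- comp_assoc, <- runit_nat, comp_assoc, runit_iso1, comp_id_l. reflexivity.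
Qed.

End UnitCoherence.

Section DrinfeldCenter.
Context {C : Monoidal}.

Definition hb_invertible (Z : ZObj C) : Prop :=
  forall X : C, exists g : hom (X ⊗ zob Z) (zob Z ⊗ X),
    g ∘ zhb Z X = idm _ /\ zhb Z X ∘ g = idm _.

Definition hb_natural (Z : ZObj C) : Prop :=
  forall (X Y : C) (f : hom X Y),
    zhb Z Y ∘ (idm (zob Z) ⊗m f) = (f ⊗m idm (zob Z)) ∘ zhb Z X.

Definition hb_tens_compat (Z : ZObj C) : Prop :=
  forall X Y : C,
    zhb Z (X ⊗ Y)
    = assoc_inv X Y (zob Z) ∘ (idm X ⊗m zhb Z Y) ∘ assoc X (zob Z) Y
      ∘ (zhb Z X ⊗m idm Y) ∘ assoc_inv (zob Z) X Y.

Lemma hb_invertible_ztens (V W : ZObj C) :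
  hb_invertible V -> hb_invertible W -> hb_invertible (ztens V W).
Proof.
  intros HV HW X. destruct (HV X) as [gV [gV1 gV2]], (HW X) as [gW [gW1 gW2]].
  exists (assoc_inv (zob V) (zob W) X ∘ (idm (zob V) ⊗m gW) ∘ assoc (zob V) X (zob W)
          ∘ (gV ⊗m idm (zob W)) ∘ assoc_inv X (zob V) (zob W)).
  cbn [ztens zhb zob]. split; apply idm_comp_cancel; assoc_l.
  - rewrite_chain (assoc_iso1 C X (zob V) (zob W)).
    rewrite_chain (whisker_r_inverse (zob W) _ _ _ _ gV1).
    rewrite_chain (assoc_iso2 C (zob V) X (zob W)).
    rewrite_chain (whisker_l_inverse (zob V) _ _ _ _ gW1).
    rewrite_chain (assoc_iso1 C (zob V) (zob W) X).
    reflexivity.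
  - rewrite_chain (assoc_iso2 C (zob V) (zob W) X).
    rewrite_chain (whisker_l_inverse (zob V) _ _ _ _ gW2).
    rewrite_chain (assoc_iso1 C (zob V) X (zob W)).
    rewrite_chain (whisker_r_inverse (zob W) _ _ _ _ gV2).
    rewrite_chain (assoc_iso2 C X (zob V) (zob W)).
    reflexivity.
Qed.

Lemma hb_natural_ztens (V W : ZObj C) :
  hb_natural V -> hb_natural W -> hb_natural (ztens V W).
Proof.
  intros HV HW X Y f. cbn [ztens zhb zob]. apply idm_comp_cancel. assoc_l.
  rewrite_chain (assoc_nat3 (zob V) (zob W) X Y f).
  rewrite_whisker_l (zob V) (HW X Y f).
  rewrite_chain (assoc_inv_nat2 (zob V) X Y (zob W) f).
  rewrite_whisker_r (zob W) (HV X Y f).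
  rewrite_chain (assoc_nat1 X Y (zob V) (zob W) f).
  reflexivity.
Qed.

Lemma hb_tens_compat_ztens (V W : ZObj C) :
  hb_tens_compat V -> hb_tens_compat W -> hb_tens_compat (ztens V W).
Proof.
  intros HV HW X Y. cbn [ztens zhb zob]. rewrite HV, HW.
  repeat rewrite whisker_l_comp. repeat rewrite whisker_r_comp.
  apply idm_comp_cancel. assoc_l.
  set (v := zhb V); set (w := zhb W).
  rewrite_chain (pentagon_whisker_assoc_inv (zob V) (zob W) X Y).
  rewrite_chain (eq_sym (assoc_nat2 (zob V) (zob W ⊗ X) (X ⊗ zob W) Y (w X))).
  f_equal; f_equal; f_equal.
  rewrite_chain (pentagon_whisker_assoc (zob V) X (zob W) Y).
  f_equal.
  rewrite_chain (eq_sym (assoc_nat3 (zob V) X (zob W ⊗ Y) (Y ⊗ zob W) (w Y))).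
  rewrite_chain (eq_sym (pentagon C X (zob V) (zob W) Y)).
  rewrite_chain (assoc_nat1 (zob V ⊗ X) (X ⊗ zob V) (zob W) Y (v X)).
  rewrite_chain (eq_sym (assoc_nat3 X (zob V) (zob W ⊗ Y) (Y ⊗ zob W) (w Y))).
  rewrite_chain (whisker_exchange _ _ _ _ (v X) (w Y)).
  f_equal; f_equal.
  rewrite_chain (pentagon_inv (zob V) X Y (zob W)).
  rewrite_chain (eq_sym (assoc_inv_nat1 (zob V ⊗ X) (X ⊗ zob V) Y (zob W) (v X))).
  f_equal.
  rewrite_chain (pentagon_whisker_assoc_inv X (zob V) Y (zob W)).
  f_equal; f_equal.
  rewrite_chain (eq_sym (assoc_nat2 X (zob V ⊗ Y) (Y ⊗ zob V) (zob W) (v Y))).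
  f_equal.
  rewrite_chain (pentagon_assoc_whisker_inv X Y (zob V) (zob W)).
  reflexivity.
Qed.

Lemma half_braiding_ztens (V W : ZObj C) :
  is_half_braiding V -> is_half_braiding W -> is_half_braiding (ztens V W).
Proof.
  intros [HV1 [HV2 HV3]] [HW1 [HW2 HW3]]. split; [|split].
  - exact (hb_invertible_ztens V W HV1 HW1).
  - exact (hb_natural_ztens V W HV2 HW2).
  - exact (hb_tens_compat_ztens V W HV3 HW3).
Qed.

Lemma half_braiding_zunit : is_half_braiding (zunit C).
Proof.
  split; [|split]; cbn [zunit zhb zob].
  - intros X. exists (lunit_inv X ∘ runit X). split; apply idm_comp_cancel; assoc_l.
    + rewrite_chain (runit_iso2 C X). rewrite_chain (lunit_iso1 C X). reflexivity.
    + rewrite_chain (lunit_iso2 C X). rewrite_chain (runit_iso1 C X). reflexivity.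
  - intros X Y f. apply idm_comp_cancel. assoc_l.
    rewrite_chain (lunit_nat C X Y f). rewrite_chain (runit_inv_nat X Y f). reflexivity.
  - intros X Y.
    assert (Hl : (lunit X ⊗m idm Y) ∘ assoc_inv unit_ob X Y = lunit (X ⊗ Y)).
    { rewrite <- lunit_tens, <- comp_assoc, assoc_iso2, comp_id_r. reflexivity. }
    assert (Hr : assoc_inv X Y unit_ob ∘ (idm X ⊗m runit_inv Y) = runit_inv (X ⊗ Y)).
    { apply (inverse_unique (runit (X ⊗ Y))); [|apply runit_iso2].
      rewrite runit_tens. apply idm_comp_cancel. assoc_l.
      rewrite_chain (whisker_l_inverse X _ _ _ _ (runit_iso1 C Y)).
      rewrite_chain (assoc_iso1 C X Y unit_ob). reflexivity. }
    apply idm_comp_cancel. repeat rewrite whisker_l_comp. repeat rewrite whisker_r_comp. assoc_l.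
    rewrite_chain (triangle C X Y). rewrite_chain (whisker_r_inverse Y _ _ _ _ (runit_iso2 C X)).
    rewrite_chain Hl. rewrite_chain Hr. reflexivity.
Qed.

Lemma zmor_comp (U V W : ZObj C) (f : hom (zob U) (zob V)) (g : hom (zob V) (zob W)) :
  is_zmor U V f -> is_zmor V W g -> is_zmor U W (g ∘ f).
Proof.
  intros Hf Hg X. rewrite whisker_l_comp, whisker_r_comp. apply idm_comp_cancel. assoc_l.
  rewrite_chain (Hf X). rewrite_chain (Hg X). reflexivity.
Qed.

Lemma zmor_whisker_l (V W W' : ZObj C) (g : hom (zob W) (zob W')) :
  is_zmor W W' g -> is_zmor (ztens V W) (ztens V W') (idm (zob V) ⊗m g).
Proof.
  intros Hg X. cbn [ztens zhb zob]. apply idm_comp_cancel. assoc_l.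
  rewrite_chain (assoc_nat2 (zob V) (zob W) (zob W') X g).
  rewrite_whisker_l (zob V) (eq_sym (Hg X)).
  rewrite_chain (assoc_inv_nat3 (zob V) X (zob W) (zob W') g).
  rewrite_chain (eq_sym (whisker_exchange _ _ _ _ (zhb V X) g)).
  rewrite_chain (assoc_nat3 X (zob V) (zob W) (zob W') g).
  reflexivity.
Qed.

Lemma zmor_whisker_r (V V' W : ZObj C) (f : hom (zob V) (zob V')) :
  is_zmor V V' f -> is_zmor (ztens V W) (ztens V' W) (f ⊗m idm (zob W)).
Proof.
  intros Hf X. cbn [ztens zhb zob]. apply idm_comp_cancel. assoc_l.
  rewrite_chain (assoc_nat1 (zob V) (zob V') (zob W) X f).
  rewrite_chain (whisker_exchange _ _ _ _ f (zhb W X)).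
  rewrite_chain (assoc_inv_nat1 (zob V) (zob V') X (zob W) f).
  rewrite_whisker_r (zob W) (eq_sym (Hf X)).
  rewrite_chain (assoc_nat2 X (zob V) (zob V') (zob W) f).
  reflexivity.
Qed.

Lemma zmor_tens (V V' W W' : ZObj C) (f : hom (zob V) (zob V')) (g : hom (zob W) (zob W')) :
  is_zmor V V' f -> is_zmor W W' g -> is_zmor (ztens V W) (ztens V' W') (f ⊗m g).
Proof.
  intros Hf Hg. rewrite tens_split.
  apply (zmor_comp (ztens V W) (ztens V W') (ztens V' W'));
    [apply zmor_whisker_l | apply zmor_whisker_r]; assumption.
Qed.

End DrinfeldCenter.

Section Centers.
Context {C : Monoidal}.

Definition is_central (A : Alg C) (Z : ZObj C) (zeta : hom (zob Z) (aob A)) : Prop :=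
  amul A ∘ (zeta ⊗m idm (aob A)) = amul A ∘ (idm (aob A) ⊗m zeta) ∘ zhb Z (aob A).

Lemma amul_assoc_inv (A : Alg C) :
  amul A ∘ (idm (aob A) ⊗m amul A)
  = amul A ∘ (amul A ⊗m idm (aob A)) ∘ assoc_inv (aob A) (aob A) (aob A).
Proof.
  apply (iso_move_r (assoc (aob A) (aob A) (aob A))); [apply assoc_iso2|].
  symmetry. apply amul_assoc.
Qed.

Lemma is_central_mul (A : Alg C) (V W : ZObj C)
  (v : hom (zob V) (aob A)) (w : hom (zob W) (aob A)) :
  is_central A V v -> is_central A W w ->
  is_central A (ztens V W) (amul A ∘ (v ⊗m w)).
Proof.
  unfold is_central. intros Hv Hw. cbn [ztens zhb zob]. rewrite (tens_split _ _ _ _ v w).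
  repeat rewrite whisker_l_comp. repeat rewrite whisker_r_comp.
  apply idm_comp_cancel. assoc_l.
  rewrite_chain (amul_assoc C A).
  rewrite_chain (assoc_nat1 (zob V) (aob A) (aob A) (aob A) v).
  rewrite_chain (assoc_nat2 (zob V) (zob W) (aob A) (aob A) w).
  rewrite_chain (whisker_exchange _ _ _ _ v (amul A)).
  rewrite_whisker_l (zob V) Hw.
  rewrite_chain (eq_sym (whisker_exchange _ _ _ _ v (amul A))).
  rewrite_chain (amul_assoc_inv A).
  rewrite_chain (assoc_inv_nat1 (zob V) (aob A) (aob A) (aob A) v).
  rewrite_chain (assoc_inv_nat3 (zob V) (aob A) (zob W) (aob A) w).
  rewrite_whisker_r (aob A) Hv.
  rewrite_chain (eq_sym (whisker_exchange _ _ _ _ (zhb V (aob A)) w)).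
  rewrite_chain (amul_assoc C A).
  rewrite_chain (assoc_nat2 (aob A) (zob V) (aob A) (aob A) v).
  rewrite_chain (assoc_nat3 (aob A) (zob V) (zob W) (aob A) w).
  rewrite_chain (assoc_iso2 C (aob A) (aob A) (aob A)).
  reflexivity.
Qed.

Lemma is_central_unit (A : Alg C) : is_central A (zunit C) (aunit A).
Proof.
  unfold is_central. cbn [zunit zhb].
  rewrite amul_unit_l, amul_unit_r, comp_assoc, runit_iso2, comp_id_l. reflexivity.
Qed.

Lemma center_mor_unique (P : ZObj C -> Prop) (A : Alg C) (Z Z' : ZObj C)
  (zeta : hom (zob Z) (aob A)) (zeta' : hom (zob Z') (aob A)) (f g : hom (zob Z') (zob Z)) :
  is_P_center P A Z zeta -> center_cand P A Z' zeta' ->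
  is_zmor Z' Z f -> zeta ∘ f = zeta' -> is_zmor Z' Z g -> zeta ∘ g = zeta' -> f = g.
Proof.
  intros [_ Hterm] Hcand Hf Hfz Hg Hgz.
  destruct (Hterm Z' zeta' Hcand) as [h [_ Hh]].
  rewrite <- (Hh f), <- (Hh g); auto.
Qed.

Lemma full_center_alg_mor (A : Alg C) (ZF Z : ZObj C)
  (zetaF : hom (zob ZF) (aob A)) (zeta : hom (zob Z) (aob A))
  (mF : hom (zob ZF ⊗ zob ZF) (zob ZF)) (uF : hom unit_ob (zob ZF))
  (m : hom (zob Z ⊗ zob Z) (zob Z)) (u : hom unit_ob (zob Z)) (xi : hom (zob Z) (zob ZF)) :
  is_full_center A ZF zetaF -> center_alg_structure A ZF zetaF mF uF ->
  center_cand in_center A Z zeta -> center_alg_structure A Z zeta m u ->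
  is_zmor Z ZF xi -> zetaF ∘ xi = zeta ->
  is_alg_mor xi m u mF uF.
Proof.
  intros HF [HmF [HuF [HzmF HzuF]]] [HZ Hzeta] [Hm [Hu [Hzm Hzu]]] Hxi Hxiz. split.
  - apply (center_mor_unique in_center A ZF (ztens Z Z) zetaF (amul A ∘ (zeta ⊗m zeta))); auto.
    + split; [apply half_braiding_ztens | apply is_central_mul]; assumption.
    + apply (zmor_comp (ztens Z Z) Z ZF); assumption.
    + rewrite comp_assoc, Hxiz. exact Hzm.
    + apply (zmor_comp (ztens Z Z) (ztens ZF ZF) ZF); [apply zmor_tens|]; assumption.
    + rewrite comp_assoc, HzmF, <- comp_assoc, <- tens_comp, Hxiz. reflexivity.
  - apply (center_mor_unique in_center A ZF (zunit C) zetaF (aunit A)); auto.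
    + split; [apply half_braiding_zunit | apply is_central_unit].
    + apply (zmor_comp (zunit C) Z ZF); assumption.
    + rewrite comp_assoc, Hxiz. exact Hzu.
Qed.

End Centers.

Theorem corollary3p17 (B : Braided) (C : Monoidal) (BC : BCentral B C) (A : Alg C)
  (ZB : ZObj C) (zetaB : hom (zob ZB) (aob A))
  (ZF : ZObj C) (zetaF : hom (zob ZF) (aob A)) :
  is_B_center BC A ZB zetaB ->
  is_full_center A ZF zetaF ->
  exists xi : hom (zob ZB) (zob ZF),
    (is_zmor ZB ZF xi /\ zetaF ∘ xi = zetaB) /\
    (forall xi' : hom (zob ZB) (zob ZF),
        is_zmor ZB ZF xi' /\ zetaF ∘ xi' = zetaB -> xi' = xi) /\
    (forall (mB : hom (zob ZB ⊗ zob ZB) (zob ZB)) (uB : hom unit_ob (zob ZB))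
            (mF : hom (zob ZF ⊗ zob ZF) (zob ZF)) (uF : hom unit_ob (zob ZF)),
        center_alg_structure A ZB zetaB mB uB ->
        center_alg_structure A ZF zetaF mF uF ->
        is_alg_mor xi mB uB mF uF).
Proof.
  intros [[[HB_hb _] HB_central] _] HF.
  assert (HB_cand : center_cand in_center A ZB zetaB) by (split; assumption).
  destruct (proj2 HF ZB zetaB HB_cand) as [xi [[Hxi Hxiz] Huniq]].
  exists xi. split; [split; assumption | split].
  - intros xi' Hxi'. symmetry. exact (Huniq xi' Hxi').
  - intros mB uB mF uF HB_alg HF_alg.
    exact (full_center_alg_mor A ZF ZB zetaF zetaB mF uF mB uB xi
             HF HF_alg HB_cand HB_alg Hxi Hxiz).
Qed.
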